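(* Let $n \ge 1$ and $0 \le k < n$ be integers. Then \[ \left| \binom{n}{k+1} G_{k+1} \right| \le 7\,(n/\pi)^{k+1}. \]
   Context: The Bernoulli numbers $B_k$ are defined by $\frac{t}{e^t-1} = \sum_{k\ge 0} \frac{B_k}{k!} t^k$, and the Genocchi numbers by $G_k = 2(1-2^k)B_k$. *)

From Stdlib Require Import Reals Lra Lia List.
Open Scope R_scope.

(* Bernoulli numbers B_0, ..., B_n (convention B_1 = -1/2, i.e. the one
   given by t/(e^t-1)), computed by the standard recurrence
   sum_{j=0}^{m} C(m+1,j) B_j = 0 for m >= 1, B_0 = 1.
   [bern_list n] is the list [B_0; ...; B_n]. *)
Fixpoint bern_list (n : nat) : list R :=
  match n with
  | O => 1 :: nil
  | S m =>
      let l := bern_list m in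
      l ++ (- (/ INR (m + 2)) *
              sum_f_R0 (fun j => C (m + 2) j * nth j l 0) m) :: nil
  end.

Definition bernoulli (n : nat) : R := nth n (bern_list n) 0.

Definition genocchi (k : nat) : R := 2 * (1 - 2 ^ k) * bernoulli k.

From Stdlib Require Import Reals Lra Lia List.
From Coquelicot Require Import Coquelicot.
From Stdlib Require Import Binomial Factorial.
Open Scope R_scope.

(* Write m = k + 1.  For odd m >= 3 the Genocchi number vanishes and m = 1 is
   immediate.  For even m, |G_m| <= 2^(m+1) |B_m| and C(n,m) m! <= n^m, so it
   suffices that 12 (2 PI)^(m-2) |B_m| <= m!; then PI^2 <= 21/2 gives the constant 7.

   The bound on B_m comes from the square norms X_m = int_0^1 B_m(x)^2 dx of the
   Bernoulli polynomials.  For odd m >= 3, B_m vanishes at 0, 1/2 and 1, so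
   Wirtinger's inequality on both halves of [0,1] gives 4 PI^2 X_m <= m^2 X_(m-1);
   an integration by parts and Cauchy-Schwarz turn this into
   (2 PI)^4 X_m <= (m (m-1))^2 X_(m-2).  Starting from X_1 = 1/12 this yields
   12 (2 PI)^(2(m-1)) X_m <= (m!)^2 for odd m, and B_m = m int_0^1 B_1 B_(m-1)
   together with Cauchy-Schwarz once more bounds B_m for even m. *)

(** * Binomial coefficients *)

Lemma C_succ_diag_l m : C (S m) m = INR (S m).
Proof.
  unfold C. replace (S m - m)%nat with 1%nat by lia.
  rewrite fact_simpl, mult_INR; simpl (fact 1).
  change (INR 1) with 1; field; apply INR_fact_neq_0.
Qed.

Lemma C_succ_mul_sub p i :
  (i <= p)%nat -> C (S p) i * INR (S p - i) = INR (S p) * C p i.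
Proof.
  intros Hi; unfold C; replace (S p - i)%nat with (S (p - i)) by lia.
  rewrite (fact_simpl p), (fact_simpl (p - i)), !mult_INR.
  field; repeat split; try apply INR_fact_neq_0; apply not_0_INR; lia.
Qed.

Lemma fact_le_pow_mul_fact n m : (m <= n)%nat -> (fact n <= n ^ m * fact (n - m))%nat.
Proof.
  induction m as [|m IH]; intros Hmn; [rewrite Nat.sub_0_r; simpl; lia|].
  specialize (IH ltac:(lia)).
  replace (n - m)%nat with (S (n - S m)) in IH by lia.
  rewrite fact_simpl in IH; simpl Nat.pow.
  assert (S (n - S m) * fact (n - S m) <= n * fact (n - S m))%nat
    by (apply Nat.mul_le_mono_r; lia).
  nia.
Qed.

Lemma C_mul_fact_le_pow n m : (m <= n)%nat -> C n m * INR (fact m) <= INR n ^ m.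
Proof.
  intros Hmn.
  pose proof (le_INR _ _ (fact_le_pow_mul_fact n m Hmn)) as H.
  rewrite mult_INR, pow_INR in H.
  assert (0 < INR (fact (n - m))) by apply INR_fact_lt_0.
  assert (0 < INR (fact m)) by apply INR_fact_lt_0.
  unfold C; apply (Rmult_le_reg_r (INR (fact (n - m)))); [assumption|].
  replace (_ * INR (fact m) * _) with (INR (fact n)) by (field; lra).
  exact H.
Qed.

Lemma C_nonneg n m : 0 <= C n m.
Proof.
  unfold C; apply Rmult_le_pos; [apply pos_INR|].
  apply Rlt_le, Rinv_0_lt_compat, Rmult_lt_0_compat; apply INR_fact_lt_0.
Qed.

(* The hypothesis is needed: [C 0 1 = 1] because [0 - 1 = 0] in [nat]. *)
Lemma C_n_1 n : (1 <= n)%nat -> C n 1 = INR n.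
Proof.
  intros Hn; destruct n as [|n]; [lia|].
  rewrite <- (C_succ_diag_l n), pascal_step1 by lia.
  now replace (S n - 1)%nat with n by lia.
Qed.

(** * Real analysis *)

Lemma MVT_is_derive (f df : R -> R) a b :
  (forall x, is_derive f x (df x)) -> exists c, f b - f a = df c * (b - a).
Proof.
  intros Hf; destruct (MVT_gen f a b df) as [c [_ Hc]]; [intros; apply Hf| |eauto].
  intros x _; apply continuity_pt_filterlim.
  apply (ex_derive_continuous (V := R_NormedModule)); eexists; apply Hf.
Qed.

Lemma is_derive_sum_f_R0 (g dg : nat -> R -> R) N x :
  (forall i, (i <= N)%nat -> is_derive (g i) x (dg i x)) ->
  is_derive (fun y => sum_f_R0 (fun i => g i y) N) x (sum_f_R0 (fun i => dg i x) N).
Proof.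
  induction N as [|N IH]; intros Hg; simpl; [apply Hg; lia|].
  apply (is_derive_plus (fun y => sum_f_R0 (fun i => g i y) N) (g (S N))).
  - apply IH; intros; apply Hg; lia.
  - apply Hg; lia.
Qed.

Lemma continuous_of_ex_derive (f : R -> R) x : ex_derive f x -> continuous f x.
Proof. apply (ex_derive_continuous (V := R_NormedModule)). Qed.

Lemma ex_RInt_of_ex_derive (f : R -> R) a b : (forall x, ex_derive f x) -> ex_RInt f a b.
Proof.
  intros Hf; apply (ex_RInt_continuous (V := R_CompleteNormedModule)).
  intros; apply continuous_of_ex_derive, Hf.
Qed.

Lemma RInt_of_is_derive (f df : R -> R) a b :
  (forall x, is_derive f x (df x)) -> (forall x, ex_derive df x) ->
  RInt df a b = f b - f a.
Proof.
  intros Hf Hdf; apply (is_RInt_unique (V := R_CompleteNormedModule)).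
  apply (is_RInt_derive f df); intros; [apply Hf | apply continuous_of_ex_derive, Hdf].
Qed.

Lemma RInt_lin_comb (f g : R -> R) c d a b : ex_RInt f a b -> ex_RInt g a b ->
  RInt (fun x => c * f x + d * g x) a b = c * RInt f a b + d * RInt g a b.
Proof.
  intros Hf Hg; apply (is_RInt_unique (V := R_CompleteNormedModule)).
  exact (is_RInt_plus _ _ a b _ _ (is_RInt_scal _ a b c _ (RInt_correct _ _ _ Hf))
                                  (is_RInt_scal _ a b d _ (RInt_correct _ _ _ Hg))).
Qed.

Lemma Rle_of_le_plus_small_multiple x y z :
  (forall d, 0 < d <= 1 -> x <= y + d * z) -> x <= y.
Proof.
  intros H; apply Rle_plus_epsilon; intros eps Heps.
  set (d := Rmin 1 (eps / (Rabs z + 1))).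
  assert (Hz := Rabs_pos z).
  assert (Hd : 0 < d <= 1).
  { split; [apply Rmin_pos; [lra | apply Rdiv_lt_0_compat; lra] | apply Rmin_l]. }
  assert (Hdz : d * (Rabs z + 1) <= eps).
  { apply (Rmult_le_reg_r (/ (Rabs z + 1))); [apply Rinv_0_lt_compat; lra|].
    rewrite Rmult_assoc, Rinv_r, Rmult_1_r by lra; apply Rmin_r. }
  specialize (H d Hd); pose proof (Rle_abs z); nra.
Qed.

Lemma sqr_le_mul_of_quadratic_nonneg a b c :
  0 <= b -> (forall t, 0 <= a + 2 * t * c + t ^ 2 * b) -> c ^ 2 <= a * b.
Proof.
  intros Hb H; destruct (Req_dec b 0) as [->|Hb0].
  - destruct (Req_dec c 0) as [->|Hc0]; [lra|].
    specialize (H (- (a + 1) / (2 * c))).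
    replace (a + _ + _) with (-1) in H by (field; exact Hc0); lra.
  - specialize (H (- c / b)).
    replace (a + _ + _) with ((a * b - c ^ 2) / b) in H by (field; exact Hb0).
    apply Rmult_le_compat_r with (r := b) in H; [|lra].
    unfold Rdiv in H; rewrite Rmult_assoc, Rinv_l in H by exact Hb0; lra.
Qed.

Lemma RInt_Cauchy_Schwarz (f g : R -> R) a b : a <= b ->
  ex_RInt (fun x => f x ^ 2) a b -> ex_RInt (fun x => g x ^ 2) a b ->
  ex_RInt (fun x => f x * g x) a b ->
  RInt (fun x => f x * g x) a b ^ 2 <=
  RInt (fun x => f x ^ 2) a b * RInt (fun x => g x ^ 2) a b.
Proof.
  intros Hab Hf Hg Hfg.
  apply sqr_le_mul_of_quadratic_nonneg.
  { apply RInt_ge_0; [exact Hab | exact Hg | intros; apply pow2_ge_0]. }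
  intros t.
  set (F := RInt (fun x => f x ^ 2) a b); set (G := RInt (fun x => g x ^ 2) a b);
  set (FG := RInt (fun x => f x * g x) a b).
  assert (Hsq : is_RInt (fun x => (f x + t * g x) ^ 2) a b (F + (2 * t * FG + t ^ 2 * G))).
  { eapply is_RInt_ext; [|exact (is_RInt_plus _ _ a b _ _ (RInt_correct _ _ _ Hf)
      (is_RInt_plus _ _ a b _ _ (is_RInt_scal _ a b (2 * t) _ (RInt_correct _ _ _ Hfg))
                                (is_RInt_scal _ a b (t ^ 2) _ (RInt_correct _ _ _ Hg))))].
    intros x _; unfold plus, scal; simpl; unfold mult; simpl; ring. }
  rewrite Rplus_assoc, <- (is_RInt_unique (V := R_CompleteNormedModule) _ _ _ _ Hsq).
  apply RInt_ge_0; [exact Hab | eexists; exact Hsq | intros; apply pow2_ge_0].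
Qed.

(* With [w = PI / (b - a + 2 d)] and [phi x = w cot (w (x - a + d))], which is
   smooth on [a, b] because [d > 0], one has the pointwise identity
   [df^2 - w^2 f^2 = (df - phi f)^2 + (phi f^2)'], and [phi f^2] vanishes at
   [a] and [b]. *)
Lemma wirtinger_shifted (f df : R -> R) a b d : a < b -> 0 < d ->
  (forall x, is_derive f x (df x)) -> (forall x, ex_derive df x) -> f a = 0 -> f b = 0 ->
  (PI / (b - a + 2 * d)) ^ 2 * RInt (fun x => f x ^ 2) a b <= RInt (fun x => df x ^ 2) a b.
Proof.
  intros Hab Hd Hf Hdf Ha Hb.
  set (w := PI / (b - a + 2 * d)).
  assert (Hw : 0 < w) by (apply Rdiv_lt_0_compat; [apply PI_RGT_0 | lra]).
  assert (Hsin : forall x, Rmin a b <= x <= Rmax a b -> sin (w * (x - a + d)) <> 0).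
  { intros x Hx; rewrite Rmin_left, Rmax_right in Hx by lra.
    assert (w * (b - a + 2 * d) = PI) by (unfold w; field; lra).
    apply Rgt_not_eq, sin_gt_0; nra. }
  assert (Hfd : forall x, ex_derive f x) by (intros; eexists; apply Hf).
  assert (HDf : forall x, Derive f x = df x) by (intros; apply is_derive_unique, Hf).
  set (phi := fun x => w * cos (w * (x - a + d)) / sin (w * (x - a + d))).
  set (q := fun x => (df x - phi x * f x) ^ 2).
  set (g := fun x => phi x * f x ^ 2).
  set (dg := fun x => - (w ^ 2 + phi x ^ 2) * f x ^ 2 + 2 * phi x * f x * df x).
  assert (Hg : forall x, Rmin a b <= x <= Rmax a b -> is_derive g x (dg x)).
  { intros x Hx; unfold g, dg, phi; specialize (Hsin x Hx).
    auto_derive; [repeat split; auto|].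
    rewrite HDf; unfold Rminus in *; field; exact Hsin. }
  assert (Hdg : is_RInt dg a b 0).
  { replace 0 with (g b - g a) by (unfold g; rewrite Ha, Hb; ring).
    apply (is_RInt_derive g dg a b Hg); intros x Hx.
    apply continuous_of_ex_derive; unfold dg, phi; specialize (Hsin x Hx).
    auto_derive; repeat split; auto. }
  assert (Hq : ex_RInt q a b).
  { apply (ex_RInt_continuous (V := R_CompleteNormedModule)); intros x Hx.
    apply continuous_of_ex_derive; unfold q, phi; specialize (Hsin x Hx).
    auto_derive; repeat split; auto. }
  assert (Hf2 : ex_RInt (fun x => f x ^ 2) a b).
  { apply ex_RInt_of_ex_derive; intros; apply ex_derive_pow, Hfd. }
  assert (Hdf2 : ex_RInt (fun x => df x ^ 2) a b).
  { apply ex_RInt_of_ex_derive; intros; apply ex_derive_pow, Hdf. }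
  assert (Hsplit : RInt (fun x => df x ^ 2) a b - w ^ 2 * RInt (fun x => f x ^ 2) a b
                   = RInt q a b).
  { rewrite <- Rplus_0_r, <- (is_RInt_unique (V := R_CompleteNormedModule) _ _ _ _ Hdg).
    replace (_ - _) with
      (1 * RInt (fun x => df x ^ 2) a b + (- w ^ 2) * RInt (fun x => f x ^ 2) a b) by ring.
    rewrite <- RInt_lin_comb by assumption.
    rewrite <- (Rmult_1_l (RInt q a b)), <- (Rmult_1_l (RInt dg a b)).
    rewrite <- (RInt_lin_comb q dg) by (auto; eexists; exact Hdg).
    apply RInt_ext; intros x Hx.
    assert (Hx' : Rmin a b <= x <= Rmax a b) by lra; specialize (Hsin x Hx').
    change (@eq R (1 * df x ^ 2 + - w ^ 2 * f x ^ 2) (1 * q x + 1 * dg x)).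
    unfold q, dg, phi; field; exact Hsin. }
  assert (0 <= RInt q a b) by (apply RInt_ge_0; [lra | exact Hq | intros; apply pow2_ge_0]).
  lra.
Qed.

Lemma wirtinger (f df : R -> R) a b : a < b ->
  (forall x, is_derive f x (df x)) -> (forall x, ex_derive df x) -> f a = 0 -> f b = 0 ->
  PI ^ 2 * RInt (fun x => f x ^ 2) a b <= (b - a) ^ 2 * RInt (fun x => df x ^ 2) a b.
Proof.
  intros Hab Hf Hdf Ha Hb.
  set (A := RInt (fun x => df x ^ 2) a b); set (B := RInt (fun x => f x ^ 2) a b).
  apply (Rle_of_le_plus_small_multiple _ _ ((4 * (b - a) + 4) * Rabs A)).
  intros d Hd.
  pose proof (wirtinger_shifted f df a b d Hab (proj1 Hd) Hf Hdf Ha Hb) as Hw.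
  fold A B in Hw.
  assert (Hshift : PI ^ 2 * B <= (b - a + 2 * d) ^ 2 * A).
  { replace (PI ^ 2 * B) with ((b - a + 2 * d) ^ 2 * ((PI / (b - a + 2 * d)) ^ 2 * B))
      by (field; lra).
    apply Rmult_le_compat_l; [apply pow2_ge_0 | exact Hw]. }
  assert ((4 * (b - a) + 4 * d) * A <= (4 * (b - a) + 4) * Rabs A).
  { apply Rle_trans with ((4 * (b - a) + 4 * d) * Rabs A).
    - apply Rmult_le_compat_l; [lra | apply Rle_abs].
    - apply Rmult_le_compat_r; [apply Rabs_pos | lra]. }
  nra.
Qed.

Lemma PI_sqr_le : PI ^ 2 <= 21/2.
Proof.
  destruct (PI_ineq 5) as [_ H]; unfold tg_alt, PI_tg in H; simpl in H.
  pose proof PI_RGT_0; nra.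
Qed.

(** * Bernoulli polynomials *)

Lemma length_bern_list m : length (bern_list m) = S m.
Proof. induction m as [|m IH]; simpl; auto. rewrite length_app, IH; simpl; lia. Qed.

Lemma nth_bern_list j m : (j <= m)%nat -> nth j (bern_list m) 0 = bernoulli j.
Proof.
  intros Hjm; induction Hjm as [|m Hjm IH]; [reflexivity|].
  simpl; rewrite app_nth1; [exact IH|]. rewrite length_bern_list; lia.
Qed.

Lemma bernoulli_rec m : sum_f_R0 (fun j => C (m + 2) j * bernoulli j) (S m) = 0.
Proof.
  assert (Hlast : bernoulli (S m) =
    - / INR (m + 2) * sum_f_R0 (fun j => C (m + 2) j * bernoulli j) m).
  { unfold bernoulli at 1; simpl bern_list.
    rewrite app_nth2; rewrite length_bern_list, ?Nat.sub_diag; [|lia]; simpl.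
    f_equal; apply sum_eq; intros i Hi; rewrite nth_bern_list; auto. }
  simpl sum_f_R0 at 1; rewrite Hlast.
  replace (m + 2)%nat with (S (S m)) by lia; rewrite C_succ_diag_l.
  field; apply not_0_INR; lia.
Qed.

Lemma bernoulli_0 : bernoulli 0 = 1.
Proof. reflexivity. Qed.

Lemma bernoulli_1 : bernoulli 1 = -1/2.
Proof. unfold bernoulli; simpl; unfold C; simpl; field. Qed.

Definition bernpoly (m : nat) (x : R) : R :=
  sum_f_R0 (fun i => C m i * bernoulli i * x ^ (m - i)) m.

Lemma bernpoly_0 x : bernpoly 0 x = 1.
Proof. unfold bernpoly; simpl; rewrite C_n_n, bernoulli_0; ring. Qed.

Lemma bernpoly_1 x : bernpoly 1 x = x - 1/2.
Proof. unfold bernpoly; simpl; unfold C; simpl; rewrite bernoulli_0, bernoulli_1; field. Qed.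

Lemma is_derive_bernpoly m x :
  is_derive (bernpoly (S m)) x (INR (S m) * bernpoly m x).
Proof.
  unfold bernpoly.
  replace (INR (S m) * _) with (sum_f_R0 (fun i =>
      C (S m) i * bernoulli i * (INR (S m - i) * x ^ pred (S m - i))) (S m)).
  - apply (is_derive_sum_f_R0 (fun i y => C (S m) i * bernoulli i * y ^ (S m - i))
      (fun i y => C (S m) i * bernoulli i * (INR (S m - i) * y ^ pred (S m - i)))).
    intros i _; apply is_derive_scal.
    auto_derive; auto; apply Rmult_1_l.
  - symmetry; rewrite tech5, Nat.sub_diag, Rmult_0_l, Rmult_0_r, Rplus_0_r, scal_sum.
    apply sum_eq; intros i Hi.
    replace (pred (S m - i)) with (m - i)%nat by lia.
    transitivity (bernoulli i * x ^ (m - i) * (INR (S m) * C m i)); [ring|].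
    rewrite <- C_succ_mul_sub by exact Hi; ring.
Qed.

Lemma ex_derive_bernpoly m x : ex_derive (bernpoly m) x.
Proof.
  destruct m as [|m].
  - apply (ex_derive_ext (fun _ => 1)); [intros; rewrite bernpoly_0; reflexivity|].
    apply ex_derive_const.
  - eexists; apply is_derive_bernpoly.
Qed.

Lemma bernpoly_at_0 m : bernpoly m 0 = bernoulli m.
Proof.
  unfold bernpoly; destruct m as [|m]; [simpl; rewrite C_n_n; ring|].
  rewrite tech5, sum_eq_R0, Nat.sub_diag, C_n_n; [simpl; ring|].
  intros i Hi; replace (S m - i)%nat with (S (m - i)) by lia; simpl; ring.
Qed.

Lemma bernpoly_at_1 m : bernpoly (S (S m)) 1 = bernoulli (S (S m)).
Proof.
  pose proof (bernoulli_rec m) as Hrec.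
  replace (m + 2)%nat with (S (S m)) in Hrec by lia.
  unfold bernpoly; rewrite tech5, pow1, C_n_n.
  rewrite (sum_eq _ (fun j => C (S (S m)) j * bernoulli j)), Hrec;
    [ring | intros; rewrite pow1; ring].
Qed.

Definition reflect_defect m x := bernpoly m (1 - x) - (-1) ^ m * bernpoly m x.

Lemma is_derive_reflect_defect m x :
  is_derive (reflect_defect (S m)) x (- INR (S m) * reflect_defect m x).
Proof.
  evar (l : R); replace (- INR (S m) * _) with l; unfold l.
  - apply (is_derive_minus (fun x => bernpoly (S m) (1 - x))).
    + apply (is_derive_comp (bernpoly (S m)) (fun x => 1 - x)); [apply is_derive_bernpoly|].
      auto_derive; auto.
    + apply is_derive_scal, is_derive_bernpoly.
  - unfold reflect_defect, minus, plus, opp, scal; simpl; unfold mult; simpl; ring.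
Qed.

Lemma reflect_defect_even p :
  reflect_defect (2 * p + 2) 0 = 0 /\ reflect_defect (2 * p + 2) 1 = 0.
Proof.
  unfold reflect_defect; rewrite Rminus_0_r, Rminus_eq_0.
  replace (2 * p + 2)%nat with (2 * (p + 1))%nat by lia; rewrite pow_1_even.
  replace (2 * (p + 1))%nat with (S (S (2 * p))) by lia.
  rewrite bernpoly_at_1, bernpoly_at_0; split; ring.
Qed.

Lemma reflect_defect_eq_0 m x : reflect_defect m x = 0.
Proof.
  revert x; induction m as [|m IH]; intros x.
  - unfold reflect_defect; rewrite !bernpoly_0; simpl; ring.
  - assert (Hconst : forall y, reflect_defect (S m) y = reflect_defect (S m) 0).
    { intros y; destruct (MVT_is_derive (reflect_defect (S m))
        (fun z => - INR (S m) * reflect_defect m z) 0 y) as [c Hc];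
        [intros; apply is_derive_reflect_defect|].
      rewrite IH in Hc; lra. }
    rewrite Hconst; destruct (Nat.Even_or_Odd (S m)) as [[p Hp]|[p Hp]].
    + destruct p as [|p]; [lia|].
      replace (S m) with (2 * p + 2)%nat by lia; apply reflect_defect_even.
    + (* The defect of index [S (S m)] vanishes at 0 and 1, and by [Hconst]
         its derivative is the constant [- INR (S (S m)) * reflect_defect (S m) 0]. *)
      destruct (MVT_is_derive (reflect_defect (S (S m)))
        (fun y => - INR (S (S m)) * reflect_defect (S m) y) 0 1) as [c Hc];
        [intros; apply is_derive_reflect_defect|].
      destruct (reflect_defect_even p) as [H0 H1].
      replace (2 * p + 2)%nat with (S (S m)) in H0, H1 by lia.
      rewrite H0, H1, Hconst in Hc.
      assert (0 < INR (S (S m))) by (apply lt_0_INR; lia).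
      nra.
Qed.

Lemma bernpoly_reflect m x : bernpoly m (1 - x) = (-1) ^ m * bernpoly m x.
Proof. pose proof (reflect_defect_eq_0 m x) as H; unfold reflect_defect in H; lra. Qed.

Lemma bernoulli_odd q : bernoulli (2 * q + 3) = 0.
Proof.
  pose proof (bernpoly_reflect (2 * q + 3) 0) as H.
  replace (2 * q + 3)%nat with (S (2 * (q + 1))) in H at 2 by lia.
  rewrite pow_1_odd in H.
  replace (2 * q + 3)%nat with (S (S (2 * q + 1))) in H |- * by lia.
  rewrite Rminus_0_r, bernpoly_at_1, bernpoly_at_0 in H; lra.
Qed.

Lemma bernpoly_odd_half q : bernpoly (2 * q + 1) (1/2) = 0.
Proof.
  pose proof (bernpoly_reflect (2 * q + 1) (1/2)) as H.
  replace (2 * q + 1)%nat with (S (2 * q)) in H at 2 by lia.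
  rewrite pow_1_odd in H; replace (1 - 1/2) with (1/2) in H by field; lra.
Qed.

(** * Square norms of Bernoulli polynomials *)

Lemma ex_RInt_bernpoly_mul m p a b : ex_RInt (fun x => bernpoly m x * bernpoly p x) a b.
Proof.
  apply ex_RInt_of_ex_derive; intros; auto_derive; repeat split; apply ex_derive_bernpoly.
Qed.

Lemma ex_RInt_bernpoly_sqr m a b : ex_RInt (fun x => bernpoly m x ^ 2) a b.
Proof. apply ex_RInt_of_ex_derive; intros; apply ex_derive_pow, ex_derive_bernpoly. Qed.

Definition bernpoly_sqnorm m : R := RInt (fun x => bernpoly m x ^ 2) 0 1.

Lemma bernpoly_sqnorm_nonneg m : 0 <= bernpoly_sqnorm m.
Proof.
  apply RInt_ge_0; [lra | apply ex_RInt_bernpoly_sqr | intros; apply pow2_ge_0].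
Qed.

Lemma bernpoly_sqnorm_1 : bernpoly_sqnorm 1 = 1/12.
Proof.
  unfold bernpoly_sqnorm.
  rewrite (RInt_ext _ (fun x => (x - 1/2) ^ 2)) by (intros; rewrite bernpoly_1; reflexivity).
  rewrite (RInt_of_is_derive (fun x => (x - 1/2) ^ 3 / 3)); [field | |].
  - intros; auto_derive; auto; field.
  - intros; auto_derive; auto.
Qed.

Lemma RInt_bernpoly m : RInt (bernpoly (S m)) 0 1 = 0.
Proof.
  assert (H : RInt (fun x => INR (S (S m)) * bernpoly (S m) x) 0 1 = 0).
  { rewrite (RInt_of_is_derive (bernpoly (S (S m)))), bernpoly_at_1, bernpoly_at_0.
    - apply Rminus_diag.
    - intros; exact (is_derive_bernpoly _ _).
    - intros; auto_derive; auto using ex_derive_bernpoly. }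
  rewrite (RInt_scal (V := R_CompleteNormedModule)) in H
    by apply ex_RInt_of_ex_derive, ex_derive_bernpoly.
  assert (0 < INR (S (S m))) by (apply lt_0_INR; lia).
  apply (Rmult_eq_reg_l (INR (S (S m)))); [rewrite Rmult_0_r; exact H | lra].
Qed.

Lemma RInt_bernpoly_by_parts k p :
  INR (S k) * RInt (fun x => bernpoly k x * bernpoly (S p) x) 0 1
  + INR (S p) * RInt (fun x => bernpoly (S k) x * bernpoly p x) 0 1
  = bernpoly (S k) 1 * bernpoly (S p) 1 - bernpoly (S k) 0 * bernpoly (S p) 0.
Proof.
  rewrite <- RInt_lin_comb by apply ex_RInt_bernpoly_mul.
  apply (RInt_of_is_derive (fun x => bernpoly (S k) x * bernpoly (S p) x)).
  - intros x; evar (l : R); replace (_ + _) with l; unfold l.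
    + apply (is_derive_mult (bernpoly (S k)) (bernpoly (S p)));
        try exact (is_derive_bernpoly _ _).
      intros; apply Rmult_comm.
    + unfold plus, mult; simpl; ring.
  - intros; auto_derive; repeat split; apply ex_derive_bernpoly.
Qed.

Lemma bernoulli_as_RInt j :
  bernoulli (S (S j)) = INR (S (S j)) * RInt (fun x => bernpoly 1 x * bernpoly (S j) x) 0 1.
Proof.
  pose proof (RInt_bernpoly_by_parts 0 (S j)) as H.
  rewrite bernpoly_at_1, !bernpoly_at_0, bernoulli_1, bernpoly_1 in H.
  rewrite (RInt_ext _ (bernpoly (S (S j)))), RInt_bernpoly in H
    by (intros; rewrite bernpoly_0; apply Rmult_1_l).
  lra.
Qed.

Lemma bernpoly_by_parts_vanishing k :
  bernpoly (S (S k)) 0 = 0 -> bernpoly (S (S k)) 1 = 0 ->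
  INR (S k) * RInt (fun x => bernpoly k x * bernpoly (S (S k)) x) 0 1
  + INR (S (S k)) * bernpoly_sqnorm (S k) = 0.
Proof.
  intros H0 H1; pose proof (RInt_bernpoly_by_parts k (S k)) as H.
  rewrite H0, H1, !Rmult_0_r, Rminus_0_r in H.
  replace (bernpoly_sqnorm (S k)) with
    (RInt (fun x => bernpoly (S k) x * bernpoly (S k) x) 0 1); [exact H|].
  apply RInt_ext; intros; simpl; ring.
Qed.

Lemma bernpoly_sqnorm_wirtinger p :
  bernpoly (S p) 0 = 0 -> bernpoly (S p) (1/2) = 0 -> bernpoly (S p) 1 = 0 ->
  4 * PI ^ 2 * bernpoly_sqnorm (S p) <= INR (S p) ^ 2 * bernpoly_sqnorm p.
Proof.
  intros H0 Hhalf H1.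
  set (df := fun x => INR (S p) * bernpoly p x).
  assert (Hf : forall x, is_derive (bernpoly (S p)) x (df x))
    by (intros; exact (is_derive_bernpoly _ _)).
  assert (Hdf : forall x, ex_derive df x)
    by (intros; unfold df; auto_derive; auto using ex_derive_bernpoly).
  assert (Hleft := wirtinger _ _ 0 (1/2) ltac:(lra) Hf Hdf H0 Hhalf).
  assert (Hright := wirtinger _ _ (1/2) 1 ltac:(lra) Hf Hdf Hhalf H1).
  assert (Hdf2 : RInt (fun x => df x ^ 2) 0 1 = INR (S p) ^ 2 * bernpoly_sqnorm p).
  { unfold bernpoly_sqnorm; rewrite <- (RInt_scal (V := R_CompleteNormedModule))
      by apply ex_RInt_bernpoly_sqr.
    apply RInt_ext; intros; unfold df, scal; simpl; unfold mult; simpl; ring. }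
  assert (Hchasles : forall g : R -> R, (forall x, ex_derive g x) ->
    RInt g 0 (1/2) + RInt g (1/2) 1 = RInt g 0 1).
  { intros g Hg; exact (RInt_Chasles g 0 (1/2) 1
      (ex_RInt_of_ex_derive g _ _ Hg) (ex_RInt_of_ex_derive g _ _ Hg)). }
  rewrite <- Hdf2; unfold bernpoly_sqnorm.
  rewrite <- !Hchasles by (intros; apply ex_derive_pow; auto using ex_derive_bernpoly).
  replace ((1/2 - 0) ^ 2) with (/4) in Hleft by field.
  replace ((1 - 1/2) ^ 2) with (/4) in Hright by field.
  lra.
Qed.

Lemma bernpoly_sqnorm_step q :
  16 * PI ^ 4 * bernpoly_sqnorm (2 * q + 3)
  <= INR (2 * q + 3) ^ 2 * INR (2 * q + 2) ^ 2 * bernpoly_sqnorm (2 * q + 1).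
Proof.
  set (k := (2 * q + 1)%nat).
  replace (2 * q + 3)%nat with (S (S k)) by (unfold k; lia).
  replace (2 * q + 2)%nat with (S k) by (unfold k; lia).
  assert (H0 : bernpoly (S (S k)) 0 = 0).
  { rewrite bernpoly_at_0; replace (S (S k)) with (2 * q + 3)%nat by (unfold k; lia).
    apply bernoulli_odd. }
  assert (H1 : bernpoly (S (S k)) 1 = 0) by (rewrite bernpoly_at_1, <- bernpoly_at_0; exact H0).
  assert (Hhalf : bernpoly (S (S k)) (1/2) = 0).
  { replace (S (S k)) with (2 * (q + 1) + 1)%nat by (unfold k; lia); apply bernpoly_odd_half. }
  assert (Hw := bernpoly_sqnorm_wirtinger (S k) H0 Hhalf H1).
  assert (Hparts := bernpoly_by_parts_vanishing k H0 H1).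
  assert (Hcs := RInt_Cauchy_Schwarz (bernpoly k) (bernpoly (S (S k))) 0 1 ltac:(lra)
    (ex_RInt_bernpoly_sqr _ _ _) (ex_RInt_bernpoly_sqr _ _ _) (ex_RInt_bernpoly_mul _ _ _ _)).
  fold (bernpoly_sqnorm k) (bernpoly_sqnorm (S (S k))) in Hcs.
  set (Z := RInt (fun x => bernpoly k x * bernpoly (S (S k)) x) 0 1) in *.
  set (X0 := bernpoly_sqnorm k) in *; set (X1 := bernpoly_sqnorm (S k)) in *;
    set (X2 := bernpoly_sqnorm (S (S k))) in *.
  assert (HX0 : 0 <= X0) by apply bernpoly_sqnorm_nonneg.
  assert (HX2 : 0 <= X2) by apply bernpoly_sqnorm_nonneg.
  assert (Ha : 0 < INR (S k)) by (apply lt_0_INR; lia).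
  assert (Hb : 0 < INR (S (S k))) by (apply lt_0_INR; lia).
  assert (HP : 0 <= 4 * PI ^ 2 * X2) by (pose proof PI_RGT_0; apply Rmult_le_pos; nra).
  assert (Hsq : (4 * PI ^ 2 * X2) ^ 2 <= INR (S (S k)) ^ 2 * INR (S k) ^ 2 * (X0 * X2)).
  { assert (HX1 : INR (S (S k)) ^ 2 * X1 = - (INR (S (S k)) * INR (S k) * Z)).
    { replace (INR (S (S k)) ^ 2 * X1) with (INR (S (S k)) * (INR (S (S k)) * X1)) by ring.
      replace (INR (S (S k)) * X1) with (- (INR (S k) * Z)) by lra; ring. }
    apply Rle_trans with ((- (INR (S (S k)) * INR (S k) * Z)) ^ 2).
    - apply pow_incr; split; [exact HP | lra].
    - replace ((- _) ^ 2) with (INR (S (S k)) ^ 2 * INR (S k) ^ 2 * Z ^ 2) by ring.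
      apply Rmult_le_compat_l; [nra | exact Hcs]. }
  destruct (Req_dec X2 0) as [HX2z|HX2pos].
  { rewrite HX2z, Rmult_0_r; apply Rmult_le_pos; [nra | exact HX0]. }
  apply (Rmult_le_reg_r X2); [lra|].
  replace (16 * PI ^ 4 * X2 * X2) with ((4 * PI ^ 2 * X2) ^ 2) by ring.
  replace (_ * X0 * X2) with (INR (S (S k)) ^ 2 * INR (S k) ^ 2 * (X0 * X2)) by ring.
  exact Hsq.
Qed.

Lemma bernpoly_sqnorm_odd_le q :
  bernpoly_sqnorm (2 * q + 1) * (2 * PI) ^ (4 * q) * 12 <= INR (fact (2 * q + 1)) ^ 2.
Proof.
  induction q as [|q IH].
  - change (2 * 0 + 1)%nat with 1%nat; rewrite bernpoly_sqnorm_1; simpl; lra.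
  - replace (2 * S q + 1)%nat with (S (S (2 * q + 1))) by lia.
    rewrite !fact_simpl, !mult_INR.
    replace (S (S (2 * q + 1))) with (2 * q + 3)%nat by lia.
    replace (S (2 * q + 1)) with (2 * q + 2)%nat by lia.
    replace (4 * S q)%nat with (4 * q + 4)%nat by lia; rewrite pow_add.
    pose proof (bernpoly_sqnorm_step q) as Hstep.
    assert (HP : 0 <= (2 * PI) ^ (4 * q)) by (apply pow_le; pose proof PI_RGT_0; lra).
    set (a := INR (2 * q + 3)); set (b := INR (2 * q + 2));
      set (P := (2 * PI) ^ (4 * q)) in *.
    apply Rle_trans with (a ^ 2 * b ^ 2 * (bernpoly_sqnorm (2 * q + 1) * P * 12)).
    + replace ((2 * PI) ^ 4) with (16 * PI ^ 4) by ring.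
      replace (a ^ 2 * b ^ 2 * _) with (a ^ 2 * b ^ 2 * bernpoly_sqnorm (2 * q + 1) * (P * 12))
        by ring.
      replace (bernpoly_sqnorm (2 * q + 3) * _ * 12)
        with (16 * PI ^ 4 * bernpoly_sqnorm (2 * q + 3) * (P * 12)) by ring.
      apply Rmult_le_compat_r; [lra | exact Hstep].
    + replace ((a * (b * INR (fact (2 * q + 1)))) ^ 2)
        with (a ^ 2 * b ^ 2 * INR (fact (2 * q + 1)) ^ 2) by ring.
      apply Rmult_le_compat_l; [nra | exact IH].
Qed.

Lemma bernoulli_even_le j :
  Rabs (bernoulli (2 * j + 2)) * (2 * PI) ^ (2 * j) * 12 <= INR (fact (2 * j + 2)).
Proof.
  pose proof (bernoulli_as_RInt (2 * j)) as HB.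
  replace (S (S (2 * j))) with (2 * j + 2)%nat in HB by lia.
  replace (S (2 * j)) with (2 * j + 1)%nat in HB by lia.
  pose proof (RInt_Cauchy_Schwarz (bernpoly 1) (bernpoly (2 * j + 1)) 0 1 ltac:(lra)
    (ex_RInt_bernpoly_sqr _ _ _) (ex_RInt_bernpoly_sqr _ _ _) (ex_RInt_bernpoly_mul _ _ _ _))
    as Hcs.
  fold (bernpoly_sqnorm 1) (bernpoly_sqnorm (2 * j + 1)) in Hcs.
  rewrite bernpoly_sqnorm_1 in Hcs.
  pose proof (bernpoly_sqnorm_odd_le j) as Hodd.
  replace (4 * j)%nat with (2 * j * 2)%nat in Hodd by lia; rewrite pow_mult in Hodd.
  replace (fact (2 * j + 2)) with ((2 * j + 2) * fact (2 * j + 1))%nat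
    by (replace (2 * j + 2)%nat with (S (2 * j + 1)) by lia; reflexivity).
  rewrite mult_INR, HB, Rabs_mult, Rabs_pos_eq by apply pos_INR.
  set (Z := RInt _ 0 1) in *; set (P := (2 * PI) ^ (2 * j)) in *.
  set (M := INR (2 * j + 2)); set (F := INR (fact (2 * j + 1))) in *.
  assert (HP : 0 <= P) by (apply pow_le; pose proof PI_RGT_0; lra).
  assert (HM : 0 <= M) by apply pos_INR.
  assert (HF : 0 <= F) by apply pos_INR.
  pose proof (bernpoly_sqnorm_nonneg (2 * j + 1)).
  assert (HZ : (Rabs Z * P * 12) ^ 2 <= F ^ 2).
  { rewrite !Rpow_mult_distr, pow2_abs; nra. }
  replace (M * Rabs Z * P * 12) with (M * (Rabs Z * P * 12)) by ring.
  apply Rmult_le_compat_l; [exact HM|].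
  assert (0 <= Rabs Z * P * 12) by (pose proof (Rabs_pos Z); nra).
  nra.
Qed.

(** * Genocchi numbers *)

Lemma genocchi_1 : genocchi 1 = 1.
Proof. unfold genocchi; rewrite bernoulli_1; field. Qed.

Lemma genocchi_odd q : genocchi (2 * q + 3) = 0.
Proof. unfold genocchi; rewrite bernoulli_odd; ring. Qed.

Lemma genocchi_even_le j :
  Rabs (genocchi (2 * j + 2)) * PI ^ (2 * j + 2) <= 2/3 * PI ^ 2 * INR (fact (2 * j + 2)).
Proof.
  pose proof (bernoulli_even_le j) as HB.
  unfold genocchi; set (B := bernoulli (2 * j + 2)) in *.
  set (T := 2 ^ (2 * j)); set (Q := PI ^ (2 * j)).
  rewrite Rpow_mult_distr in HB; fold T Q in HB.
  replace (2 ^ (2 * j + 2)) with (4 * T) by (unfold T; rewrite pow_add; simpl; ring).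
  rewrite (pow_add PI); fold Q.
  assert (HT : 1 <= T) by (apply pow_R1_Rle; lra).
  assert (HQ : 0 < Q) by (apply pow_lt, PI_RGT_0).
  assert (HPI : 0 < PI ^ 2) by (apply pow_lt, PI_RGT_0).
  rewrite !Rabs_mult, (Rabs_left1 (1 - 4 * T)), (Rabs_pos_eq 2) by lra.
  pose proof (Rabs_pos B).
  apply Rle_trans with (8 * T * Rabs B * (Q * PI ^ 2)).
  - apply Rmult_le_compat_r; nra.
  - replace (8 * T * Rabs B * (Q * PI ^ 2))
      with (2/3 * PI ^ 2 * (Rabs B * (T * Q) * 12)) by field.
    apply Rmult_le_compat_l; [lra | exact HB].
Qed.

Lemma C_genocchi_even_le n j : (2 * j + 2 <= n)%nat ->
  Rabs (C n (2 * j + 2) * genocchi (2 * j + 2)) <= 7 * (INR n / PI) ^ (2 * j + 2).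
Proof.
  intros Hn; set (m := (2 * j + 2)%nat).
  assert (HPIm : 0 < PI ^ m) by apply pow_lt, PI_RGT_0.
  unfold Rdiv; rewrite Rpow_mult_distr, pow_inv, Rabs_mult, (Rabs_pos_eq (C n m))
    by apply C_nonneg.
  apply (Rmult_le_reg_r (PI ^ m)); [exact HPIm|].
  replace (7 * _ * _) with (7 * INR n ^ m) by (field; lra).
  pose proof (genocchi_even_le j) as HG; fold m in HG.
  pose proof (C_mul_fact_le_pow n m Hn) as HC.
  pose proof (C_nonneg n m); pose proof PI_sqr_le; pose proof (pow_lt _ 2 PI_RGT_0).
  apply Rle_trans with (C n m * (2/3 * PI ^ 2 * INR (fact m))).
  - rewrite Rmult_assoc; apply Rmult_le_compat_l; assumption.
  - replace (C n m * _) with (2/3 * PI ^ 2 * (C n m * INR (fact m))) by ring.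
    pose proof (pow_le _ m (pos_INR n)); nra.
Qed.

Theorem mainTheorem4 (n k : nat) (hn : (1 <= n)%nat) (hk : (k < n)%nat) :
  Rabs (C n (k + 1) * genocchi (k + 1)) <= 7 * (INR n / PI) ^ (k + 1).
Proof.
  assert (Hratio : 0 <= INR n / PI)
    by (apply Rdiv_le_0_compat; [apply pos_INR | apply PI_RGT_0]).
  destruct (Nat.Even_or_Odd k) as [[[|i] ->]|[j ->]].
  - change (2 * 0 + 1)%nat with 1%nat.
    rewrite C_n_1, genocchi_1, Rmult_1_r, Rabs_pos_eq, pow_1 by (auto; apply pos_INR).
    pose proof PI_RGT_0; pose proof PI_4.
    replace (INR n) with (INR n / PI * PI) at 1 by (field; lra); nra.
  - replace (2 * S i + 1)%nat with (2 * i + 3)%nat by lia.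
    rewrite genocchi_odd, Rmult_0_r, Rabs_R0.
    apply Rmult_le_pos; [lra | apply pow_le, Hratio].
  - replace (2 * j + 1 + 1)%nat with (2 * j + 2)%nat by lia.
    apply C_genocchi_even_le; lia.
Qed.
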